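(* Let $K\ge 2$, let $\mathcal{X}$ be an input space, let $\mathcal{Y}$ be the set of probability vectors in $\mathbb{R}^K$, and for $k\in\{1,\dots,K\}$ let $\vec{k}\in\mathcal{Y}$ denote the one-hot vector of label $k$. Let $f:\mathcal{X}\to\mathcal{Y}$ be a classifier whose output probability vectors have strictly positive entries, and let $\ell(\boldsymbol{p},\boldsymbol{y}):=-\sum_{k=1}^K\boldsymbol{y}[k]\log\boldsymbol{p}[k]$ be the cross-entropy loss. Let $\boldsymbol{y}\in\mathcal{Y}$ be a one-hot label vector, let $\widetilde{\boldsymbol{x}}\in\mathcal{X}$ be arbitrary (a perturbed version of a training input), let $0<\epsilon\le 2$, and let $k^\ast$ be a least likely label under $f(\widetilde{\boldsymbol{x}})$, i.e. $k^\ast\in\arg\min_{k} f(\widetilde{\boldsymbol{x}})[k]$. Define $$\rho(\widetilde{\boldsymbol{x}},\boldsymbol{y}):=\Big(1-\frac{\epsilon}{2}\Big)\boldsymbol{y}+\frac{\epsilon}{2}\vec{k^\ast}\in\mathcal{Y}.$$ Then $$\rho(\widetilde{\boldsymbol{x}},\boldsymbol{y})\in\arg\max_{\widetilde{\boldsymbol{y}}\in\mathcal{Y},\ \|\widetilde{\boldsymbol{y}}-\boldsymbol{y}\|_1\le\epsilon}\ \ell\big(f(\widetilde{\boldsymbol{x}}),\widetilde{\boldsymbol{y}}\big),$$ i.e. $\rho(\widetilde{\boldsymbol{x}},\boldsymbol{y})$ maximizes the cross-entropy loss of the prediction $f(\widetilde{\boldsymbol{x}})$ over all label distributions within $\mathrm{L}_1$-distance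 $\epsilon$ of $\boldsymbol{y}$.
   Context: Labels are represented as probability vectors over $\{1,\dots,K\}$; $\|\cdot\|_1$ is the $\mathrm{L}_1$ norm on $\mathbb{R}^K$. The vector $\rho(\widetilde{\boldsymbol{x}},\boldsymbol{y})$ (the ''adversarial label'') is obtained by shifting probability mass $\epsilon/2$ from the ground-truth label to the least likely predicted label. *)

From mathcomp Require Import all_boot all_order all_algebra.
From mathcomp Require Import all_classical all_reals exp.
Set Implicit Arguments. Unset Strict Implicit. Unset Printing Implicit Defensive.
Import Order.TTheory GRing.Theory Num.Theory.
Local Open Scope ring_scope.

(* label vectors over {1..K} are indexed by 'I_K *)
Definition is_prob (R : realType) (K : nat) (v : 'I_K -> R) : Prop :=
  (forall k, 0 <= v k) /\ \sum_(k < K) v k = 1.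

Definition onehot (R : realType) (K : nat) (k : 'I_K) : 'I_K -> R :=
  fun j => (j == k)%:R.

Definition CE (R : realType) (K : nat) (p y : 'I_K -> R) : R :=
  - \sum_(k < K) y k * ln (p k).

Definition l1dist (R : realType) (K : nat) (u v : 'I_K -> R) : R :=
  \sum_(k < K) `|u k - v k|.

(* The loss [CE p v = \sum_j v j * c j] with [c j = - ln (p j)] is linear in
   [v], and [c] is largest at the least likely label [kstar].  A probability
   vector [v] at L1 distance [d] from the one-hot vector of [k0] puts mass
   exactly [d / 2] off [k0], so its loss is at most [(1 - d/2) c k0 + d/2 c kstar];
   as [c k0 <= c kstar], this is maximal for [d = eps], which is the loss of [rho]. *)
From mathcomp Require Import all_boot all_order all_algebra.
From mathcomp Require Import all_classical all_reals exp.
From mathcomp Require Import ring lra.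
Set Implicit Arguments. Unset Strict Implicit. Unset Printing Implicit Defensive.
Import Order.TTheory GRing.Theory Num.Theory.
Local Open Scope ring_scope.

Section ProbabilityVectors.
Variables (R : realType) (K : nat).
Implicit Types (u v c : 'I_K -> R) (k m : 'I_K) (t : R).

Lemma sum_onehotM k c : \sum_(j < K) @onehot R K k j * c j = c k.
Proof.
rewrite (bigD1 k) //= big1 ?addr0; first by rewrite /onehot eqxx mul1r.
by move=> j /negbTE jk; rewrite /onehot jk mul0r.
Qed.

Lemma is_prob_onehot k : is_prob (@onehot R K k).
Proof.
split; first by move=> j; rewrite /onehot ler0n.
by rewrite -[RHS](sum_onehotM k (fun _ => 1)); apply: eq_bigr => j _; rewrite mulr1.
Qed.

Lemma is_prob_convex u v t : 0 <= t <= 1 -> is_prob u -> is_prob v ->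
  is_prob (fun j => (1 - t) * u j + t * v j).
Proof.
case/andP=> t_ge0 t_le1 [u_ge0 u_sum] [v_ge0 v_sum]; split.
  by move=> j; rewrite addr_ge0 ?mulr_ge0 ?subr_ge0.
by rewrite big_split /= -!mulr_sumr u_sum v_sum !mulr1 subrK.
Qed.

Lemma l1dist_convex u v t : 0 <= t ->
  l1dist (fun j => (1 - t) * u j + t * v j) u = t * l1dist v u.
Proof.
move=> t_ge0; rewrite /l1dist mulr_sumr; apply: eq_bigr => j _.
rewrite (_ : _ - u j = t * (v j - u j)); last by ring.
by rewrite normrM ger0_norm.
Qed.

Lemma l1dist_prob_le2 u v : is_prob u -> is_prob v -> l1dist u v <= 2.
Proof.
move=> [u_ge0 u_sum] [v_ge0 v_sum].
apply: (@le_trans _ _ (\sum_(j < K) (u j + v j))).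
  by apply: ler_sum => j _; rewrite (le_trans (ler_normB _ _)) // !ger0_norm.
by rewrite big_split /= u_sum v_sum.
Qed.

Lemma sum_prob_neq v k : is_prob v -> \sum_(j < K | j != k) v j = 1 - v k.
Proof. by case=> _ v_sum; rewrite -v_sum [in RHS](bigD1 k) //= addrC addrK. Qed.

Lemma l1dist_onehot v k : is_prob v -> l1dist v (@onehot R K k) = 2 * (1 - v k).
Proof.
move=> v_prob; have [v_ge0 _] := v_prob; have off_k := sum_prob_neq k v_prob.
rewrite /l1dist (bigD1 k) //= /onehot eqxx ler0_norm; last first.
  by rewrite subr_le0 -subr_ge0 -off_k sumr_ge0.
rewrite (eq_bigr v) ?off_k; first by rewrite mulr1n; ring.
by move=> j /negbTE ->; rewrite subr0 ger0_norm.
Qed.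

Lemma sum_prob_mulr_le v c k m t : is_prob v -> (forall j, c j <= c m) ->
  1 - t <= v k -> \sum_(j < K) v j * c j <= (1 - t) * c k + t * c m.
Proof.
move=> v_prob c_le_m vk_ge; have [v_ge0 _] := v_prob; have c_km := c_le_m k.
have off_k := sum_prob_neq k v_prob.
have off_k_le : \sum_(j < K | j != k) v j * c j <= (1 - v k) * c m.
  by rewrite -off_k mulr_suml; apply: ler_sum => j _; apply: ler_wpM2l.
rewrite (bigD1 k) //= (le_trans (lerD (lexx _) off_k_le)) //.
rewrite -subr_ge0 (_ : _ - _ = (v k - (1 - t)) * (c m - c k)); last by ring.
by rewrite mulr_ge0 ?subr_ge0.
Qed.

Lemma CE_sumE (p v : 'I_K -> R) : CE p v = \sum_(j < K) v j * - ln (p j).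
Proof. by rewrite /CE -sumrN; apply: eq_bigr => j _; rewrite mulrN. Qed.

Lemma CE_convex_onehot (p : 'I_K -> R) k m t :
  CE p (fun j => (1 - t) * @onehot R K k j + t * @onehot R K m j)
  = (1 - t) * - ln (p k) + t * - ln (p m).
Proof.
rewrite CE_sumE; under eq_bigr => j _ do rewrite mulrDl -!mulrA.
by rewrite big_split /= -!mulr_sumr !sum_onehotM.
Qed.

End ProbabilityVectors.

Theorem theorem1 (R : realType) (K : nat) (X : Type) (f : X -> 'I_K -> R)
  (hK : (2 <= K)%N)
  (hf : forall x, is_prob (f x) /\ (forall k, 0 < f x k))
  (y : 'I_K -> R) (hy : exists k0 : 'I_K, y = @onehot R K k0)
  (xt : X) (eps : R) (heps : 0 < eps <= 2)
  (kstar : 'I_K) (hkstar : forall k, f xt kstar <= f xt k) :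
  let rho := fun j => (1 - eps / 2) * y j + eps / 2 * @onehot R K kstar j in
  [/\ is_prob rho, l1dist rho y <= eps &
      forall yt : 'I_K -> R, is_prob yt -> l1dist yt y <= eps ->
        CE (f xt) yt <= CE (f xt) rho].
Proof.
move=> rho; case: hy => k0 ->{y} in rho *.
have t01 : 0 <= eps / 2 <= 1 by case/andP: heps => ? ?; apply/andP; split; lra.
have t_ge0 : 0 <= eps / 2 by case/andP: t01.
split.
- by apply: is_prob_convex => //; apply: is_prob_onehot.
- rewrite /rho l1dist_convex //.
  have := l1dist_prob_le2 (is_prob_onehot R kstar) (is_prob_onehot R k0).
  by move/(ler_wpM2l t_ge0)/le_trans; apply; lra.
- move=> yt yt_prob; rewrite l1dist_onehot // => yt_close.
  rewrite /rho CE_convex_onehot CE_sumE.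
  apply: sum_prob_mulr_le => //; last lra.
  have [_ f_pos] := hf xt.
  by move=> j; rewrite lerN2 ler_ln ?posrE ?f_pos.
Qed.
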